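(* A $\star$-metric space $(X,d^\star)$ is compact (i.e. $(X,\mathscr{T}_{d^\star})$ is a compact topological space) if and only if $(X,d^\star)$ is complete and totally bounded.
   Context: A $t$-definer is a function $\star:[0,\infty)\times[0,\infty)\to[0,\infty)$ such that for all $a,b,c\ge 0$: $a\star b=b\star a$; $a\star(b\star c)=(a\star b)\star c$; if $a\le b$ then $a\star c\le b\star c$; $a\star 0=a$; and $\star$ is continuous in its first variable with respect to the Euclidean topology. Given a nonempty set $X$ and a $t$-definer $\star$, a $\star$-metric on $X$ is a function $d^\star:X\times X\to[0,\infty)$ such that for all $x,y,z\in X$: $d^\star(x,y)=0$ iff $x=y$; $d^\star(x,y)=d^\star(y,x)$; and $d^\star(x,y)\le d^\star(x,z)\star d^\star(z,y)$. Put $B_{d^\star}(a,r)=\{x\in X: d^\star(a,x)<r\}$ and let $\mathscr{T}_{d^\star}$ be the topology consisting of all $U\subseteq X$ such that for each $a\in U$ some $B_{d^\star}(a,r)$, $r>0$, is contained in $U$. $(X,d^\star)$ is totally bounded if for every $\epsilon>0$ there is a finite $F\subseteq X$ with $X=\bigcup_{x\in F}B_{d^\star}(x,\epsilon)$. A sequence $\{x_n\}$ is Cauchy if for every $\epsilon>0$ there is $k$ with $d^\star(x_n,x_m)<\epsilon$ for all $m,n\ge k$; it converges to $x$ if for every $\epsilon>0$ there is $k$ with $d^\star(x,x_n)<\epsilon$ for $n\ge k$. $(X,d^\star)$ is complete if every Cauchy sequence converges to a point of $X$. *)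

From Stdlib Require Import Reals List.
Open Scope R_scope.

(* A t-definer: an operation on [0,oo); we model it as R -> R -> R and
   impose the axioms on nonnegative arguments, plus that [0,oo) is closed
   under it (the codomain is [0,oo)). *)
Definition is_tdefiner (star : R -> R -> R) : Prop :=
  (forall a b, 0 <= a -> 0 <= b -> 0 <= star a b) /\
  (forall a b, 0 <= a -> 0 <= b -> star a b = star b a) /\
  (forall a b c, 0 <= a -> 0 <= b -> 0 <= c ->
     star a (star b c) = star (star a b) c) /\
  (forall a b c, 0 <= a -> 0 <= b -> 0 <= c -> a <= b -> star a c <= star b c) /\
  (forall a, 0 <= a -> star a 0 = a) /\
  (forall b a, 0 <= b -> 0 <= a ->
     forall eps, 0 < eps -> exists delta, 0 < delta /\
       forall a', 0 <= a' -> Rabs (a' - a) < delta ->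
         Rabs (star a' b - star a b) < eps).

Definition is_star_metric {X : Type} (star : R -> R -> R) (d : X -> X -> R) : Prop :=
  (forall x y, 0 <= d x y) /\
  (forall x y, d x y = 0 <-> x = y) /\
  (forall x y, d x y = d y x) /\
  (forall x y z, d x y <= star (d x z) (d z y)).

Definition ball {X : Type} (d : X -> X -> R) (a : X) (r : R) : X -> Prop :=
  fun x => d a x < r.

Definition d_open {X : Type} (d : X -> X -> R) (U : X -> Prop) : Prop :=
  forall a, U a -> exists r, 0 < r /\ forall x, ball d a r x -> U x.

Definition d_compact {X : Type} (d : X -> X -> R) : Prop :=
  forall C : (X -> Prop) -> Prop,
    (forall U, C U -> d_open d U) ->
    (forall x, exists U, C U /\ U x) ->
    exists l : list (X -> Prop),
      (forall U, In U l -> C U) /\ (forall x, exists U, In U l /\ U x).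

Definition totally_bounded {X : Type} (d : X -> X -> R) : Prop :=
  forall eps, 0 < eps -> exists F : list X,
    forall x, exists y, In y F /\ ball d y eps x.

Definition d_cauchy {X : Type} (d : X -> X -> R) (u : nat -> X) : Prop :=
  forall eps, 0 < eps -> exists k, forall m n, (k <= n)%nat -> (k <= m)%nat ->
    d (u n) (u m) < eps.

Definition d_converges {X : Type} (d : X -> X -> R) (u : nat -> X) (x : X) : Prop :=
  forall eps, 0 < eps -> exists k, forall n, (k <= n)%nat -> d x (u n) < eps.

Definition d_complete {X : Type} (d : X -> X -> R) : Prop :=
  forall u, d_cauchy d u -> exists x, d_converges d u x.

(* The t-definer enters only through two consequences of the continuity of
   [star] at [0] together with [a star 0 = a]: balls are open, and for every
   [eps] there is [delta] such that [d x z < delta] and [d z y < delta] give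
   [d x y < eps].  With these, the classical metric arguments go through.  A
   compact space is totally bounded (cover it by [eps]-balls) and complete (a
   Cauchy sequence converges to each of its cluster points, so one without a
   limit gives an open cover each member of which it eventually leaves).
   Conversely, if an open cover had no finite subcover, total boundedness
   yields nested sets [A (k+1) = A k /\ ball (y k) (1/(k+1))], none of them
   finitely covered; points picked in them form a Cauchy sequence, and a
   neighbourhood of its limit taken from the cover contains some [A k]. *)

From Stdlib Require Import Reals List Lra Lia Classical ClassicalEpsilon.
Open Scope R_scope.

Lemma tdefiner_small_right (star : R -> R -> R) : is_tdefiner star ->
  forall b, 0 <= b -> forall eps, 0 < eps -> exists delta, 0 < delta /\
    forall a, 0 <= a -> a < delta -> star b a < b + eps.
Proof.
  intros (_ & Hcomm & _ & _ & Hunit & Hcont) b Hb eps Heps.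
  destruct (Hcont b 0 Hb (Rle_refl 0) eps Heps) as (delta & Hdelta & Hclose).
  exists delta; split; [exact Hdelta |].
  intros a Ha Hsmall.
  specialize (Hclose a Ha). rewrite Rminus_0_r, Rabs_right in Hclose by lra.
  specialize (Hclose Hsmall).
  rewrite (Hcomm a b), (Hcomm 0 b), Hunit in Hclose by lra.
  apply Rabs_def2 in Hclose. lra.
Qed.

Lemma tdefiner_small (star : R -> R -> R) : is_tdefiner star ->
  forall eps, 0 < eps -> exists delta, 0 < delta /\
    forall a b, 0 <= a -> 0 <= b -> a < delta -> b < delta -> star a b < eps.
Proof.
  intros HT eps Heps.
  destruct (tdefiner_small_right star HT (eps / 2) ltac:(lra) (eps / 2) ltac:(lra))
    as (delta & Hdelta & Hsmall).
  exists (Rmin delta (eps / 2)). split; [apply Rmin_glb_lt; lra |].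
  intros a b Ha Hb Hadelta Hbdelta.
  pose proof (Rmin_l delta (eps / 2)). pose proof (Rmin_r delta (eps / 2)).
  destruct HT as (_ & Hcomm & _ & Hmono & _).
  apply Rle_lt_trans with (star (eps / 2) a).
  - rewrite (Hcomm a b) by lra. apply Hmono; lra.
  - specialize (Hsmall a Ha ltac:(lra)). lra.
Qed.

Definition radius (k : nat) : R := / INR (S k).

Lemma radius_pos k : 0 < radius k.
Proof. apply Rinv_0_lt_compat, lt_0_INR. lia. Qed.

Lemma radius_small eps : 0 < eps -> exists k, radius k < eps.
Proof.
  intros Heps. destruct (archimed_cor1 eps Heps) as (N & HN & HNpos).
  exists (pred N). unfold radius. now rewrite Nat.succ_pred_pos.
Qed.

Lemma list_of_images {A B : Type} (f : A -> B) (l : list B) :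
  (forall b, In b l -> exists a, f a = b) -> exists F, map f F = l.
Proof.
  induction l as [| b l IH]; intros Hl; [now exists nil |].
  destruct (Hl b (or_introl eq_refl)) as [a <-].
  destruct IH as [F <-]; [intros c Hc; apply Hl; now right |].
  now exists (a :: F).
Qed.

Lemma eventually_all_in_list {A : Type} (P : A -> nat -> Prop) (l : list A) :
  (forall a, In a l -> exists K, forall m, (K <= m)%nat -> P a m) ->
  exists K, forall a, In a l -> forall m, (K <= m)%nat -> P a m.
Proof.
  induction l as [| a l IH]; intros Hl; [exists 0%nat; intros b [] |].
  destruct (Hl a (or_introl eq_refl)) as [K1 HK1].
  destruct IH as [K2 HK2]; [intros b Hb; apply Hl; now right |].
  exists (K1 + K2)%nat. intros b [<- | Hb] m Hm.
  - apply HK1. lia.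
  - apply HK2; [exact Hb | lia].
Qed.

Definition finitely_covered {X : Type} (C : (X -> Prop) -> Prop) (A : X -> Prop) : Prop :=
  exists l : list (X -> Prop), (forall U, In U l -> C U) /\
    (forall x, A x -> exists U, In U l /\ U x).

Section FiniteCovers.

Variables (X : Type) (C : (X -> Prop) -> Prop).

Lemma finitely_covered_subset (A B : X -> Prop) :
  (forall x, A x -> B x) -> finitely_covered C B -> finitely_covered C A.
Proof.
  intros HAB (l & Hl & Hcover). exists l. split; [exact Hl |].
  intros x Ax. exact (Hcover x (HAB x Ax)).
Qed.

Lemma finitely_covered_union {Y : Type} (B : Y -> X -> Prop) (F : list Y) :
  (forall y, In y F -> finitely_covered C (B y)) ->
  finitely_covered C (fun x => exists y, In y F /\ B y x).
Proof.
  induction F as [| y F IH]; intros HF.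
  - exists nil. split; [intros U [] | intros x (y & [] & _)].
  - destruct (HF y (or_introl eq_refl)) as (l1 & Hl1 & Hcover1).
    destruct IH as (l2 & Hl2 & Hcover2); [intros z Hz; apply HF; now right |].
    exists (l1 ++ l2). split.
    + intros U HU. apply in_app_or in HU as [HU | HU]; auto.
    + intros x (z & [<- | Hz] & Bzx).
      * destruct (Hcover1 x Bzx) as (U & HU & Ux).
        exists U. split; [apply in_or_app; now left | exact Ux].
      * destruct (Hcover2 x (ex_intro _ z (conj Hz Bzx))) as (U & HU & Ux).
        exists U. split; [apply in_or_app; now right | exact Ux].
Qed.

Lemma not_finitely_covered_inhabited (A : X -> Prop) :
  ~ finitely_covered C A -> exists x, A x.
Proof.
  intros HA. apply NNPP. intros Hempty. apply HA.
  exists nil. split; [intros U [] |].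
  intros x Ax. exfalso. apply Hempty. now exists x.
Qed.

Lemma not_finitely_covered_refine (d : X -> X -> R) (A : X -> Prop) :
  totally_bounded d -> ~ finitely_covered C A ->
  forall eps, 0 < eps -> exists y, ~ finitely_covered C (fun x => A x /\ ball d y eps x).
Proof.
  intros Htb HA eps Heps. apply NNPP. intros Hall. apply HA.
  destruct (Htb eps Heps) as [F HF].
  apply finitely_covered_subset
    with (fun x => exists y, In y F /\ (A x /\ ball d y eps x)).
  - intros x Ax. destruct (HF x) as (y & Hy & Hxy). now exists y.
  - apply finitely_covered_union. intros y _.
    apply NNPP. intros Hy. apply Hall. now exists y.
Qed.

End FiniteCovers.

Section StarMetric.

Variables (X : Type) (star : R -> R -> R) (d : X -> X -> R).
Hypotheses (HT : is_tdefiner star) (HM : is_star_metric star d).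

Lemma ball_center x r : 0 < r -> ball d x r x.
Proof.
  destruct HM as (_ & Hzero & _). unfold ball.
  now rewrite (proj2 (Hzero x x) eq_refl).
Qed.

Lemma ball_open a r : d_open d (ball d a r).
Proof.
  intros x Hx. destruct HM as (Hnn & _ & _ & Htri). unfold ball in *.
  destruct (tdefiner_small_right star HT (d a x) (Hnn a x) (r - d a x) ltac:(lra))
    as (delta & Hdelta & Hsmall).
  exists delta; split; [exact Hdelta |].
  intros y Hy. specialize (Hsmall (d x y) (Hnn x y) Hy). specialize (Htri a y x). lra.
Qed.

Lemma small_triangle eps : 0 < eps -> exists delta, 0 < delta /\
  forall x y z, d x z < delta -> d z y < delta -> d x y < eps.
Proof.
  intros Heps. destruct (tdefiner_small star HT eps Heps) as (delta & Hdelta & Hsmall).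
  destruct HM as (Hnn & _ & _ & Htri).
  exists delta; split; [exact Hdelta |].
  intros x y z Hxz Hzy. eapply Rle_lt_trans; [apply (Htri x y z) | auto].
Qed.

Lemma cauchy_cluster_converges u x : d_cauchy d u ->
  (forall r, 0 < r -> forall K, exists m, (K <= m)%nat /\ d x (u m) < r) ->
  d_converges d u x.
Proof.
  intros Hcauchy Hcluster eps Heps.
  destruct (small_triangle eps Heps) as (delta & Hdelta & Htri).
  destruct (Hcauchy delta Hdelta) as [k Hk].
  destruct (Hcluster delta Hdelta k) as (m & Hkm & Hm).
  exists k. intros n Hkn. apply Htri with (u m); auto.
Qed.

Lemma compact_totally_bounded : d_compact d -> totally_bounded d.
Proof.
  intros Hcompact eps Heps.
  destruct (Hcompact (fun U => exists y, ball d y eps = U)) as (l & Hl & Hcover).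
  - intros U [y <-]. apply ball_open.
  - intros x. exists (ball d x eps). split; [now exists x | exact (ball_center x eps Heps)].
  - destruct (list_of_images (fun y => ball d y eps) l Hl) as [F <-].
    exists F. intros x. destruct (Hcover x) as (U & HU & Ux).
    apply in_map_iff in HU as (y & <- & Hy). now exists y.
Qed.

Lemma compact_complete : d_compact d -> d_complete d.
Proof.
  intros Hcompact u Hcauchy. apply NNPP. intros Hno.
  destruct (Hcompact (fun U => d_open d U /\ exists K, forall m, (K <= m)%nat -> ~ U (u m)))
    as (l & Hl & Hcover).
  - now intros U [HU _].
  - intros x. apply NNPP. intros Hx. apply Hno. exists x.
    apply cauchy_cluster_converges; [exact Hcauchy |].
    intros r Hr K. apply NNPP. intros Hfar. apply Hx.
    exists (ball d x r). split; [split | exact (ball_center x r Hr)].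
    + apply ball_open.
    + exists K. intros m Hm Hin. apply Hfar. now exists m.
  - destruct (eventually_all_in_list (fun U m => ~ U (u m)) l) as [K HK].
    + intros U HU. exact (proj2 (Hl U HU)).
    + destruct (Hcover (u K)) as (U & HU & Hin). exact (HK U HU K (le_n K) Hin).
Qed.

Section NestedBalls.

Variables (C : (X -> Prop) -> Prop) (inh : inhabited X).
Hypotheses (Htb : totally_bounded d) (Huncovered : ~ finitely_covered C (fun _ => True)).

Definition refine_center (k : nat) (A : X -> Prop) : X :=
  epsilon inh (fun y => ~ finitely_covered C (fun x => A x /\ ball d y (radius k) x)).

Fixpoint nest (k : nat) : X -> Prop :=
  match k with
  | O => fun _ => True
  | S k => fun x => nest k x /\ ball d (refine_center k (nest k)) (radius k) x
  end.

Lemma nest_not_finitely_covered k : ~ finitely_covered C (nest k).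
Proof.
  induction k as [| k IH]; [exact Huncovered |].
  apply (epsilon_spec inh
    (fun y => ~ finitely_covered C (fun x => nest k x /\ ball d y (radius k) x))).
  apply not_finitely_covered_refine; auto using radius_pos.
Qed.

Lemma nest_decreasing k m x : (k <= m)%nat -> nest m x -> nest k x.
Proof. induction 1 as [| m _ IH]; [auto |]. intros [Hx _]. auto. Qed.

Lemma nest_diameter eps : 0 < eps ->
  exists k, forall z w, nest (S k) z -> nest (S k) w -> d z w < eps.
Proof.
  intros Heps. destruct (small_triangle eps Heps) as (delta & Hdelta & Htri).
  destruct (radius_small delta Hdelta) as [k Hk].
  destruct HM as (_ & _ & Hsym & _).
  exists k. intros z w [_ Hz] [_ Hw]. unfold ball in *.
  apply Htri with (refine_center k (nest k)); [rewrite Hsym |]; lra.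
Qed.

Definition nest_point (k : nat) : X := epsilon inh (nest (S k)).

Lemma nest_point_in k : nest (S k) (nest_point k).
Proof.
  apply (epsilon_spec inh (nest (S k))).
  apply (not_finitely_covered_inhabited X C), nest_not_finitely_covered.
Qed.

Lemma nest_point_cauchy : d_cauchy d nest_point.
Proof.
  intros eps Heps. destruct (nest_diameter eps Heps) as [k Hk].
  exists k. intros m n Hn Hm.
  apply Hk; [apply nest_decreasing with (S n) | apply nest_decreasing with (S m)];
    solve [lia | apply nest_point_in].
Qed.

Lemma nest_limit_uncovered x U :
  d_converges d nest_point x -> d_open d U -> U x -> ~ C U.
Proof.
  intros Hlim HU Ux HCU. destruct (HU x Ux) as (r & Hr & Hball).
  destruct (small_triangle r Hr) as (delta & Hdelta & Htri).
  destruct (Hlim delta Hdelta) as [k1 Hk1].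
  destruct (nest_diameter delta Hdelta) as [k2 Hk2].
  set (k := (k1 + k2)%nat).
  assert (Hsub : forall y, nest (S k) y -> nest (S k2) y).
  { intros y. apply nest_decreasing. lia. }
  apply (nest_not_finitely_covered (S k)).
  exists (U :: nil). split; [intros V [<- | []]; exact HCU |].
  intros z Hz. exists U. split; [now left |].
  apply Hball, Htri with (nest_point k).
  - apply Hk1. lia.
  - apply Hk2; apply Hsub; [apply nest_point_in | exact Hz].
Qed.

End NestedBalls.

Lemma complete_totally_bounded_compact :
  inhabited X -> d_complete d -> totally_bounded d -> d_compact d.
Proof.
  intros inh Hcomplete Htb C Hopen Hcover. apply NNPP. intros Hno.
  assert (Huncovered : ~ finitely_covered C (fun _ => True)).
  { intros (l & Hl & Hall). apply Hno. exists l. split; [exact Hl |].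
    intros x. exact (Hall x I). }
  destruct (Hcomplete _ (nest_point_cauchy C inh Htb Huncovered)) as [x Hx].
  destruct (Hcover x) as (U & HCU & Ux).
  exact (nest_limit_uncovered C inh Htb Huncovered x U Hx (Hopen U HCU) Ux HCU).
Qed.

End StarMetric.

Theorem theorem4p6 (X : Type) (star : R -> R -> R) (d : X -> X -> R) :
  inhabited X -> is_tdefiner star -> is_star_metric star d ->
  (d_compact d <-> d_complete d /\ totally_bounded d).
Proof.
  intros inh HT HM. split.
  - intros Hcompact. split.
    + exact (compact_complete X star d HT HM Hcompact).
    + exact (compact_totally_bounded X star d HT HM Hcompact).
  - intros [Hcomplete Htb].
    exact (complete_totally_bounded_compact X star d HT HM inh Hcomplete Htb).
Qed.
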